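(* Assume (A1)–(A2) and $N\geq \max\{1,\|f\|_\infty/2\}$, and let $v_n^h$ ($n\ge0$) be the functions produced by the semi-discrete policy iteration described in the context. Then for all $n\geq 0$, $v_{n+1}^h\leq v_n^h$ in $[0,T]\times\mathbb{R}^d$.
   Context: Let $d,m\ge1$, $T\ge 1$, $A\subset\mathbb{R}^m$ compact, $c:[0,T]\times\mathbb{R}^d\times A\to\mathbb{R}$, $f:[0,T]\times\mathbb{R}^d\times A\to\mathbb{R}^d$, $q:\mathbb{R}^d\to\mathbb{R}$. Let $\alpha(t,x,p)=\operatorname{argmin}_{a\in A}[c(t,x,a)+p\cdot f(t,x,a)]$, assumed to be the unique minimizer. Assumptions: (A1) $c,f,q$ are uniformly bounded and Lipschitz continuous in all their variables; (A2) $\alpha(\cdot,\cdot,\cdot)$ and a given continuous initial policy $\alpha_0:\mathbb{R}\times\mathbb{R}^d\to A$ are uniformly Lipschitz continuous in all their variables. For $\varphi:\mathbb{R}^d\to\mathbb{R}$, $h\in(0,1)$: $\nabla^h\varphi(x)=\big(\frac{\varphi(x+he_i)-\varphi(x-he_i)}{2h}\big)_{i=1}^d$, $\Delta^h\varphi(x)=\sum_{i=1}^d\frac{\varphi(x+he_i)-2\varphi(x)+\varphi(x-he_i)}{h^2}$ (acting in $x$). Semi-discrete policy iteration: for $n=0,1,\dots$, $v_n^h$ is the bounded Lipschitz solution of $\partial_t v_n^h+c(t,x,\alpha_n(t,x))+\nabla^h v_n^h\cdot f(t,x,\alpha_n(t,x))=-Nh\Delta^h v_n^h$ in $(0,T)\times\mathbb{R}^d$,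 $v_n^h(T,x)=q(x)$, and then $\alpha_{n+1}(t,x)=\alpha(t,x,\nabla^h v_n^h(t,x))$. *)

From HB Require Import structures.
From mathcomp Require Import all_boot all_order all_algebra.
From mathcomp Require Import all_classical all_reals all_analysis.
Set Implicit Arguments. Unset Strict Implicit. Unset Printing Implicit Defensive.
Import Order.TTheory GRing.Theory Num.Theory.
Import numFieldNormedType.Exports.
Local Open Scope classical_set_scope.
Local Open Scope ring_scope.

Section Defs.
Variable R : realType.

Definition evec (d : nat) (i : 'I_d) : 'rV[R]_d := delta_mx 0 i.

Definition dotv (d : nat) (p q : 'rV[R]_d) : R := \sum_(i < d) p 0 i * q 0 i.

Definition dgrad (d : nat) (h : R) (phi : 'rV[R]_d -> R) (x : 'rV[R]_d)
  : 'rV[R]_d :=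
  \row_(i < d) ((phi (x + h *: evec i) - phi (x - h *: evec i)) / (2 * h)).

Definition dlap (d : nat) (h : R) (phi : 'rV[R]_d -> R) (x : 'rV[R]_d) : R :=
  \sum_(i < d)
    ((phi (x + h *: evec i) - 2 * phi x + phi (x - h *: evec i)) / (h ^+ 2)).

Definition lipschitz3 (V : normedModType R) (d m : nat)
  (D : R -> 'rV[R]_d -> 'rV[R]_m -> Prop)
  (g : R -> 'rV[R]_d -> 'rV[R]_m -> V) : Prop :=
  exists L : R, forall t x a t' x' a', D t x a -> D t' x' a' ->
    `|g t x a - g t' x' a'| <= L * (`|t - t'| + `|x - x'| + `|a - a'|).

Definition lipschitz2 (V : normedModType R) (d : nat)
  (D : R -> 'rV[R]_d -> Prop) (g : R -> 'rV[R]_d -> V) : Prop :=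
  exists L : R, forall t x t' x', D t x -> D t' x' ->
    `|g t x - g t' x'| <= L * (`|t - t'| + `|x - x'|).

Definition lipschitz1 (V : normedModType R) (d : nat)
  (g : 'rV[R]_d -> V) : Prop :=
  exists L : R, forall x x', `|g x - g x'| <= L * `|x - x'|.

Definition bounded3 (V : normedModType R) (d m : nat)
  (D : R -> 'rV[R]_d -> 'rV[R]_m -> Prop)
  (g : R -> 'rV[R]_d -> 'rV[R]_m -> V) : Prop :=
  exists M : R, forall t x a, D t x a -> `|g t x a| <= M.

Definition bounded2 (V : normedModType R) (d : nat)
  (D : R -> 'rV[R]_d -> Prop) (g : R -> 'rV[R]_d -> V) : Prop :=
  exists M : R, forall t x, D t x -> `|g t x| <= M.

End Defs.

From HB Require Import structures.
From mathcomp Require Import all_boot all_order all_algebra.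
From mathcomp Require Import all_classical all_reals all_analysis.
From mathcomp Require Import ring lra.
Import Order.TTheory GRing.Theory Num.Theory.
Import numFieldNormedType.Exports.
Set Implicit Arguments. Unset Strict Implicit. Unset Printing Implicit Defensive.
Local Open Scope classical_set_scope.
Local Open Scope ring_scope.

(* Let w = v_{n+1} - v_n, so that w = 0 at time T.  Since alpha_{n+1} minimises
   the Hamiltonian at the discrete gradient of v_n, subtracting the two
   equations gives  d_t w >= -(N h Delta^h w + nabla^h w . f(alpha_{n+1})).
   Because N >= |f|/2 this difference operator is monotone, so it is bounded
   by K sup_y (w(y) - w(x)).  A backward maximum principle then yields w <= 0:
   the mean value theorem on n equal subintervals of [t, T] raises sup w by
   O(1/n^2) per subinterval, so w(t) <= C / n for every large n. *)

Lemma lipschitz_continuous_within (R : realFieldType) (g : R -> R) (a b L : R) :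
  0 <= L ->
  (forall s s', a <= s <= b -> a <= s' <= b -> `|g s - g s'| <= L * `|s - s'|) ->
  {within `[a, b], continuous g}.
Proof.
move=> L0 g_lip; apply/subspace_continuousP => x /=; rewrite in_itv /= => abx.
apply/cvgrPdist_le => e e0.
suff : \forall y \near x, [set` `[a, b]] y -> `|g x - g y| <= e by [].
apply/nbhs_normP; exists (e / (L + 1)); first by rewrite /= divr_gt0 //; lra.
move=> y /= /ltW xy; rewrite /= in_itv /= => aby.
apply: (le_trans (g_lip _ _ abx aby)); apply: (le_trans (ler_wpM2l L0 xy)).
rewrite mulrA ler_pdivrMr; nra.
Qed.

Lemma mx_norm_entry_le (R : realDomainType) (m n : nat) (M : 'M[R]_(m, n)) i j :
  `|M i j| <= `|M|.
Proof.
by rewrite [leRHS]mx_normrE; apply: (le_trans _ (le_bigmax _ _ (i, j))).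
Qed.

Section DiscreteOperators.
Variables (R : realType) (d : nat) (h : R).
Implicit Types (phi psi : 'rV[R]_d -> R) (x p q r : 'rV[R]_d).

Lemma dotvBl p q r : dotv (p - q) r = dotv p r - dotv q r.
Proof. by rewrite /dotv -sumrB; apply: eq_bigr => i _; rewrite !mxE mulrBl. Qed.

Lemma dgradB phi psi x :
  dgrad h (phi \- psi) x = dgrad h phi x - dgrad h psi x.
Proof. by apply/rowP => i; rewrite !mxE /= -mulrBl; congr (_ * _); ring. Qed.

Lemma dlapB phi psi x : dlap h (phi \- psi) x = dlap h phi x - dlap h psi x.
Proof.
rewrite /dlap -sumrB; apply: eq_bigr => i _ /=.
by rewrite -mulrBl; congr (_ * _); ring.
Qed.

(* Monotonicity of the scheme: the weights 2N +- fi of the two neighbour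
   increments are nonnegative. *)
Lemma centered_difference_le (N fi wp w wm E : R) : 0 < h -> `|fi| <= 2 * N ->
  wp - w <= E -> wm - w <= E ->
  N * h * ((wp - 2 * w + wm) / h ^+ 2) + (wp - wm) / (2 * h) * fi
    <= 2 * N / h * E.
Proof.
move=> h0 /[!ler_norml] /andP[fi_ge fi_le] wpE wmE.
have -> : N * h * ((wp - 2 * w + wm) / h ^+ 2) + (wp - wm) / (2 * h) * fi
  = ((2 * N + fi) * (wp - w) + (2 * N - fi) * (wm - w)) / (2 * h).
  by field; rewrite gt_eqF.
have -> : 2 * N / h * E = ((2 * N + fi) * E + (2 * N - fi) * E) / (2 * h).
  by field; rewrite gt_eqF.
rewrite ler_pM2r ?invr_gt0 ?mulr_gt0 //.
by apply: lerD; apply: ler_wpM2l => //; lra.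
Qed.

Lemma dlap_dgrad_le (N E : R) phi x p : 0 < h ->
  `|p| <= 2 * N -> (forall y, phi y - phi x <= E) ->
  N * h * dlap h phi x + dotv (dgrad h phi x) p <= d%:R * (2 * N / h) * E.
Proof.
move=> h0 p_le phiE; rewrite /dlap /dotv mulr_sumr -big_split /=.
have -> : d%:R * (2 * N / h) * E = \sum_(i < d) (2 * N / h * E).
  by rewrite sumr_const card_ord mulr_natl mulrnAl.
apply: ler_sum => i _.
rewrite mxE; apply: centered_difference_le => //.
exact: le_trans (mx_norm_entry_le _ _ _) p_le.
Qed.

End DiscreteOperators.

Lemma improved_policy_derive_ge (R : realType) (d : nat) (h N E s c0 c1 : R)
    (u0 u1 : R -> 'rV[R]_d -> R) (x f0 f1 : 'rV[R]_d) :
  0 < h ->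
  derivable (fun s => u0 s x) s 1 -> derivable (fun s => u1 s x) s 1 ->
  'D_1 (fun s => u0 s x) s + c0 + dotv (dgrad h (u0 s) x) f0
    = - (N * h * dlap h (u0 s) x) ->
  'D_1 (fun s => u1 s x) s + c1 + dotv (dgrad h (u1 s) x) f1
    = - (N * h * dlap h (u1 s) x) ->
  c1 + dotv (dgrad h (u0 s) x) f1 <= c0 + dotv (dgrad h (u0 s) x) f0 ->
  `|f1| <= 2 * N ->
  (forall y, (u1 s y - u0 s y) - (u1 s x - u0 s x) <= E) ->
  - (d%:R * (2 * N / h) * E) <= 'D_1 (fun s => u1 s x - u0 s x) s.
Proof.
move=> h0 du0 du1 eq0 eq1 improve f1_le wE.
have := dlap_dgrad_le h0 f1_le wE.
rewrite dlapB dgradB dotvBl.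
have -> : (fun s => u1 s x - u0 s x) = (fun s => u1 s x) - (fun s => u0 s x) by [].
rewrite deriveB //; lra.
Qed.

Lemma lipschitz2_sub_time (R : realType) (d : nat) (D : R -> 'rV[R]_d -> Prop)
    (g0 g1 : R -> 'rV[R]_d -> R) :
  lipschitz2 D g0 -> lipschitz2 D g1 ->
  exists2 L, 0 <= L & forall y s s', D s y -> D s' y ->
    `|(g1 s y - g0 s y) - (g1 s' y - g0 s' y)| <= L * `|s - s'|.
Proof.
move=> [L0 g0_lip] [L1 g1_lip]; exists (`|L0| + `|L1|) => [|y s s' Ds Ds'].
  by rewrite addr_ge0.
have := g0_lip _ _ _ _ Ds Ds'; have := g1_lip _ _ _ _ Ds Ds'.
rewrite subrr normr0 addr0 => g1_le g0_le.
have -> : g1 s y - g0 s y - (g1 s' y - g0 s' y)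
  = (g1 s y - g1 s' y) - (g0 s y - g0 s' y) by ring.
rewrite mulrDl [leRHS]addrC; apply: le_trans (ler_normB _ _) _; apply: lerD.
- by apply: le_trans g1_le _; rewrite ler_wpM2r ?ler_norm.
- by apply: le_trans g0_le _; rewrite ler_wpM2r ?ler_norm.
Qed.

Section BackwardComparison.
Variables (R : realType) (X : Type) (w : R -> X -> R) (t T K L : R).
Hypotheses (K_ge0 : 0 <= K) (L_ge0 : 0 <= L).
Hypothesis w_lip : forall y s s', t <= s <= T -> t <= s' <= T ->
  `|w s y - w s' y| <= L * `|s - s'|.
Hypothesis w_derivable : forall x s, t < s < T -> derivable (w^~ x) s 1.
Hypothesis w_derive_ge : forall x s E, t < s < T ->
  (forall y, w s y - w s x <= E) -> - (K * E) <= 'D_1 (w^~ x) s.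

Lemma backward_step s0 s1 a : t <= s0 -> s0 < s1 -> s1 <= T ->
  (s1 - s0) * K <= 1 -> (forall y, w s1 y <= a) ->
  forall x, w s0 x <= a + 2 * K * L * (s1 - s0) ^+ 2.
Proof.
move=> ts0 s01 s1T dK wa x.
have in_tT s : s0 <= s <= s1 -> t <= s <= T.
  by case/andP=> s0s ss1; rewrite (le_trans ts0) ?(le_trans ss1).
have w_s1 y s : s0 <= s <= s1 -> `|w s y - w s1 y| <= L * (s1 - s0).
  move=> s01s; apply: le_trans (w_lip y (in_tT _ s01s) (in_tT s1 _)) _.
    by rewrite lexx andbT ltW.
  rewrite ler_wpM2l // distrC ger0_norm ?subr_ge0; case/andP: s01s => //; lra.
have [xi /[!in_itv] /= /andP[s0xi xis1] mvt] :
    exists2 xi, xi \in `]s0, s1[ & w s1 x - w s0 x = 'D_1 (w^~ x) xi * (s1 - s0).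
  apply: (MVT (f := w^~ x) (df := 'D_1 (w^~ x))) => //.
    move=> s /[!in_itv] /= /andP[s0s ss1].
    by apply/derivableP/w_derivable; rewrite (le_lt_trans ts0) ?(lt_le_trans ss1).
  apply: lipschitz_continuous_within L_ge0 _ => s s' ss ss'.
  exact: w_lip (in_tT _ ss) (in_tT _ ss').
have xi_in : s0 <= xi <= s1 by rewrite !ltW.
(* Lipschitz continuity in time turns the bound w <= a at s1 into a bound on the
   oscillation of w at xi. *)
set E := a - w s1 x + 2 * L * (s1 - s0).
have D_ge : - (K * E) <= 'D_1 (w^~ x) xi.
  apply: w_derive_ge; first by rewrite (le_lt_trans ts0) ?(lt_le_trans xis1).
  move=> y; have := w_s1 y _ xi_in; have := w_s1 x _ xi_in; have := wa y.
  rewrite /E !ler_norml; lra.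
have ws0_le : w s0 x <= w s1 x + (s1 - s0) * (K * E).
  have : - (K * E) * (s1 - s0) <= 'D_1 (w^~ x) xi * (s1 - s0).
    by rewrite ler_pM2r ?subr_gt0.
  lra.
have : 0 <= (1 - (s1 - s0) * K) * (a - w s1 x) by rewrite mulr_ge0 ?subr_ge0.
move: ws0_le; rewrite /E; lra.
Qed.

Lemma backward_steps n : (0 < n)%N -> t < T -> (T - t) / n%:R * K <= 1 ->
  (forall y, w T y <= 0) -> forall x, w t x <= 2 * K * L * (T - t) ^+ 2 / n%:R.
Proof.
move=> n_gt0 tT dK wT x.
set dl := (T - t) / n%:R in dK *.
have n_pos : 0 < n%:R :> R by rewrite ltr0n.
have dl_gt0 : 0 < dl by rewrite divr_gt0 ?subr_gt0.
have ndl : n%:R * dl = T - t by rewrite mulrC divfK ?gt_eqF.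
suff grid_le k : (k <= n)%N ->
    forall y, w (T - k%:R * dl) y <= k%:R * (2 * K * L * dl ^+ 2).
  have := grid_le n (leqnn n) x; rewrite ndl opprB addrC subrK.
  suff -> : n%:R * (2 * K * L * dl ^+ 2) = 2 * K * L * (T - t) ^+ 2 / n%:R by [].
  by rewrite -ndl; field; rewrite gt_eqF.
elim: k => [|k IHk] kn y; first by rewrite !mul0r subr0 wT.
have knR : k%:R + 1 <= n%:R :> R by rewrite natr1 ler_nat.
have kS : k.+1%:R = k%:R + 1 :> R by rewrite natr1.
have gap : T - k%:R * dl - (T - k.+1%:R * dl) = dl by rewrite kS; ring.
have k_ge0 : 0 <= k%:R :> R by [].
apply: le_trans (backward_step (s0 := T - k.+1%:R * dl) _ _ _ _ (IHk (ltnW kn)) y) _;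
  rewrite ?gap ?kS //; nra.
Qed.

Lemma backward_comparison : t <= T -> (forall y, w T y <= 0) ->
  forall x, w t x <= 0.
Proof.
move=> tT wT x; have [tT'|Tt] := ltP t T; last first.
  by rewrite (@le_anti _ _ t T) ?tT.
apply/ler_addgt0Pr => e e_gt0; rewrite add0r.
set C := 2 * K * L * (T - t) ^+ 2.
have C_ge0 : 0 <= C by rewrite /C mulr_ge0 ?sqr_ge0 // !mulr_ge0.
pose n := (Num.truncn (K * (T - t) + C / e)).+1.
have n_gt : K * (T - t) + C / e < n%:R := truncnS_gt _.
have n_pos : 0 < n%:R :> R by rewrite ltr0n.
have Ce_ge0 : 0 <= C / e by rewrite divr_ge0 // ltW.
apply: le_trans (backward_steps (n := n) _ tT' _ wT x) _ => //.
  by rewrite mulrAC ler_pdivrMr // mul1r; lra.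
have KT_ge0 : 0 <= K * (T - t) by rewrite mulr_ge0 // subr_ge0 ltW.
have C_lt : C < e * n%:R by rewrite mulrC -ltr_pdivrMr //; lra.
by rewrite -/C ler_pdivrMr // ltW.
Qed.

End BackwardComparison.

Theorem proposition2p3 (R : realType) (d m : nat) (T h N : R)
  (A : set 'rV[R]_m)
  (c : R -> 'rV[R]_d -> 'rV[R]_m -> R)
  (f : R -> 'rV[R]_d -> 'rV[R]_m -> 'rV[R]_d)
  (q : 'rV[R]_d -> R)
  (alpha : R -> 'rV[R]_d -> 'rV[R]_d -> 'rV[R]_m)
  (pol : nat -> R -> 'rV[R]_d -> 'rV[R]_m)
  (v : nat -> R -> 'rV[R]_d -> R) :
  (1 <= d)%N -> (1 <= m)%N -> 1 <= T -> 0 < h < 1 ->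
  compact A ->
  (* alpha(t,x,p) is the unique minimizer over A of c + p . f *)
  (forall t x p, 0 <= t <= T ->
     A (alpha t x p) /\
     forall a, A a ->
       c t x (alpha t x p) + dotv p (f t x (alpha t x p))
         <= c t x a + dotv p (f t x a) /\
       (c t x a + dotv p (f t x a)
          <= c t x (alpha t x p) + dotv p (f t x (alpha t x p)) ->
        a = alpha t x p)) ->
  (* (A1) *)
  bounded3 (fun t _ a => 0 <= t <= T /\ A a) c ->
  bounded3 (fun t _ a => 0 <= t <= T /\ A a) f ->
  (exists M : R, forall x, `|q x| <= M) ->
  lipschitz3 (fun t _ a => 0 <= t <= T /\ A a) c ->
  lipschitz3 (fun t _ a => 0 <= t <= T /\ A a) f ->
  lipschitz1 q ->
  (* (A2) *)
  lipschitz3 (fun t _ _ => 0 <= t <= T) alpha ->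
  (forall t x, A (pol 0%N t x)) ->
  (forall t, continuous (fun x => pol 0%N t x)) ->
  lipschitz2 (fun _ _ => True) (pol 0%N) ->
  (* N >= max{1, ||f||_oo / 2} *)
  1 <= N ->
  (forall t x a, 0 <= t <= T -> A a -> `|f t x a| / 2 <= N) ->
  (* semi-discrete policy iteration *)
  (forall n : nat,
     bounded2 (fun t _ => 0 <= t <= T) (v n) /\
     lipschitz2 (fun t _ => 0 <= t <= T) (v n) /\
     (forall x, v n T x = q x) /\
     (forall t x, 0 < t < T ->
        derivable (fun s => v n s x) t 1 /\
        'D_1 (fun s => v n s x) t + c t x (pol n t x)
          + dotv (dgrad h (v n t) x) (f t x (pol n t x))
        = - (N * h * dlap h (v n t) x)) /\
     (forall t x, 0 <= t <= T ->
        pol n.+1 t x = alpha t x (dgrad h (v n t) x))) ->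
  forall (n : nat) (t : R) (x : 'rV[R]_d), 0 <= t <= T ->
    v n.+1 t x <= v n t x.
Proof.
move=> _ _ _ /andP[h_gt0 _] _ alpha_min _ _ _ _ _ _ _ pol0_A _ _ N_ge1 f_le
  iteration n t x /andP[t_ge0 t_le].
have [_ [lip0 [vT0 [ode0 pol_next0]]]] := iteration n.
have [_ [lip1 [vT1 [ode1 _]]]] := iteration n.+1.
have polA k s y : 0 <= s <= T -> A (pol k s y).
  case: k => [|k] s_in; first exact: pol0_A.
  have [_ [_ [_ [_ pol_next]]]] := iteration k.
  by rewrite pol_next //; exact: (alpha_min _ _ _ s_in).1.
have [L L_ge0 w_lip] := lipschitz2_sub_time lip0 lip1.
have inner s : t < s < T -> 0 < s < T.
  by case/andP=> ts ->; rewrite (le_lt_trans t_ge0 ts).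
rewrite -subr_le0.
apply: (@backward_comparison _ _ (fun s y => v n.+1 s y - v n s y)
  t T (d%:R * (2 * N / h)) L) => //.
- by rewrite mulr_ge0 // divr_ge0 //; lra.
- move=> y s s' /andP[ts sT] /andP[ts' s'T].
  by apply: w_lip; rewrite ?sT ?s'T (le_trans t_ge0).
- move=> y s /inner s_in.
  exact: derivableB (ode1 s y s_in).1 (ode0 s y s_in).1.
- move=> y s E /inner s_in wE.
  have s_in' : 0 <= s <= T by case/andP: s_in => /ltW -> /ltW ->.
  have [[dv0 eq0] [dv1 eq1]] := (ode0 s y s_in, ode1 s y s_in).
  apply: improved_policy_derive_ge dv0 dv1 eq0 eq1 _ _ wE => //.
    rewrite pol_next0 //.
    exact: ((alpha_min s y _ s_in').2 _ (polA n s y s_in')).1.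
  by rewrite mulrC -ler_pdivrMr //; apply: f_le s_in' (polA _ _ _ s_in').
- by move=> y; rewrite vT0 vT1 subrr.
Qed.
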